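(* Let $F$ be a functor on small types. Every $F$-algebra $(A,k_A)$ induces an algebra $(TA,k_{TA})$ for the size-indexed functor $F[\Diamond-]$ whose carrier is the constant family $TA:=\lambda i.\,A:\mathsf{Size}\to U$, and this extends to a functor $T$ from $F$-algebras to $F[\Diamond-]$-algebras.
   Context: Ambient theory: an intensional dependent type theory with $\Sigma,\Pi$, identity types, a Tarski-style universe $U$ of small types (decoding implicit), function extensionality; a non-small type $\mathsf{Size}$ with a small mere-proposition strict order $j<i$; for families of small types $A(i)$ over $\mathsf{Size}$ small types $\exists i.A(i)$ (pairs $\langle s,a\rangle$, $a:A(s)$, with a dependent eliminator with definitional computation only into small families) and $\forall i.A(i)$ (size-abstraction and application, $\beta,\eta$); $\exists j<i.A(j):=\exists j.((j<i)\times A(j))$ with the inequality proof suppressed. A functor on small types: $F:U\to U$, $F_{A,B}:(A\to B)\to(FA\to FB)$, with $F(\mathrm{id})=\mathrm{id}$ and $F(g\circ f)=Fg\circ Ff$. An $F$-algebra is $(A,k_A)$ with $A:U$, $k_A:FA\to A$; a morphism $(A,k_A)\to(B,k_B)$ is $h:A\to B$ with a path $h\circ k_A=k_B\circ Fh$. For $X:\mathsf{Size}\to U$, $\Diamond_iX:=\exists j<i.X\,j$; size-indexed maps $X\overset{i}{\to}Y:=\forall i.X\,i\to Y\,i$; for $f:X\overset{i}{\to}Y$, $\Diamond f\,i\,\langle j,a\rangle:=\langle j,f\,j\,a\rangle$. An $F[\Diamond-]$-algebra is $(X,k)$ with $k:\forall i.F(\Diamond_iX)\to X\,i$; a morphism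 $(X,k)\to(Y,l)$ is $h:X\overset{i}{\to}Y$ with a path $h\circ k=l\circ(\lambda i.F(\Diamond h\,i))$, composed pointwise. A functor between these collections of algebras is an assignment on algebras and on morphisms preserving identities and composition up to propositional equality. *)

From Stdlib Require Import FunctionalExtensionality.

Set Implicit Arguments.

Record Functor := MkFunctor {
  Fo : Type -> Type;
  Fm : forall A B : Type, (A -> B) -> Fo A -> Fo B;
  Fm_id : forall A : Type, Fm (fun x : A => x) = (fun x => x);
  Fm_comp : forall (A B C : Type) (f : A -> B) (g : B -> C),
      Fm (fun x => g (f x)) = (fun x => Fm g (Fm f x))
}.
Arguments Fm f0 {A B} _ _.

Section Alg.
Variable F : Functor.

Record Alg := MkAlg { car : Type; str : Fo F car -> car }.

Record AlgHom (X Y : Alg) := MkAlgHom {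
  hmap : car X -> car Y;
  hcomm : (fun x => hmap (str X x)) = (fun x => str Y (Fm F hmap x))
}.

Lemma alg_id_comm (X : Alg) :
  (fun x => (fun a : car X => a) (str X x)) = (fun x => str X (Fm F (fun a => a) x)).
Proof. rewrite Fm_id. reflexivity. Qed.

Definition alg_id (X : Alg) : AlgHom X X := MkAlgHom X X (fun a => a) (alg_id_comm X).

Lemma alg_comp_comm (X Y Z : Alg) (g : AlgHom Y Z) (f : AlgHom X Y) :
  (fun x => hmap g (hmap f (str X x))) =
  (fun x => str Z (Fm F (fun a => hmap g (hmap f a)) x)).
Proof.
  rewrite Fm_comp.
  apply functional_extensionality; intro x.
  pose proof (f_equal (fun h => h x) (hcomm f)) as Hf; simpl in Hf.
  rewrite Hf.
  pose proof (f_equal (fun h => h (Fm F (hmap f) x)) (hcomm g)) as Hg; simpl in Hg.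
  exact Hg.
Qed.

Definition alg_comp (X Y Z : Alg) (g : AlgHom Y Z) (f : AlgHom X Y) : AlgHom X Z :=
  MkAlgHom X Z (fun a => hmap g (hmap f a)) (alg_comp_comm g f).

Variable Size : Type.
Variable lt : Size -> Size -> Prop.

Definition Diamond (X : Size -> Type) (i : Size) : Type :=
  { j : Size & (lt j i * X j)%type }.

Definition dmap (X Y : Size -> Type) (f : forall i, X i -> Y i) (i : Size)
  (d : Diamond X i) : Diamond Y i :=
  match d with existT _ j (p, a) => existT _ j (p, f j a) end.
Arguments dmap {X Y} f i d.

Record SAlg := MkSAlg {
  scar : Size -> Type;
  sstr : forall i : Size, Fo F (Diamond scar i) -> scar i
}.

Record SAlgHom (X Y : SAlg) := MkSAlgHom {
  shmap : forall i : Size, scar X i -> scar Y i;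
  shcomm : (fun i x => shmap i (sstr X i x)) =
           (fun i x => sstr Y i (Fm F (@dmap (scar X) (scar Y) shmap i) x))
}.

Lemma dmap_id (X : Size -> Type) (i : Size) :
  dmap (fun j (a : X j) => a) i = (fun d => d).
Proof. apply functional_extensionality; intros [j [p a]]; reflexivity. Qed.

Lemma dmap_comp (X Y Z : Size -> Type) (f : forall i, X i -> Y i)
  (g : forall i, Y i -> Z i) (i : Size) :
  dmap (fun j a => g j (f j a)) i = (fun d => dmap g i (dmap f i d)).
Proof. apply functional_extensionality; intros [j [p a]]; reflexivity. Qed.

Lemma salg_id_comm (X : SAlg) :
  (fun i x => (fun j (a : scar X j) => a) i (sstr X i x)) =
  (fun i x => sstr X i (Fm F (dmap (fun j (a : scar X j) => a) i) x)).
Proof.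
  apply functional_extensionality_dep; intro i.
  rewrite dmap_id, Fm_id. reflexivity.
Qed.

Definition salg_id (X : SAlg) : SAlgHom X X :=
  MkSAlgHom X X (fun j a => a) (salg_id_comm X).

Lemma salg_comp_comm (X Y Z : SAlg) (g : SAlgHom Y Z) (f : SAlgHom X Y) :
  (fun i x => shmap g i (shmap f i (sstr X i x))) =
  (fun i x => sstr Z i (Fm F (dmap (fun j a => shmap g j (shmap f j a)) i) x)).
Proof.
  apply functional_extensionality_dep; intro i.
  apply functional_extensionality; intro x.
  rewrite dmap_comp, Fm_comp.
  pose proof (f_equal (fun h => h i x) (shcomm f)) as Hf; simpl in Hf.
  rewrite Hf.
  pose proof (f_equal (fun h => h i (Fm F (dmap (shmap f) i) x)) (shcomm g)) as Hg.
  simpl in Hg. exact Hg.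
Qed.

Definition salg_comp (X Y Z : SAlg) (g : SAlgHom Y Z) (f : SAlgHom X Y) : SAlgHom X Z :=
  MkSAlgHom X Z (fun i a => shmap g i (shmap f i a)) (salg_comp_comm g f).

End Alg.

(* An F-algebra k : F A -> A becomes an F[Diamond-]-algebra on the constant
   family at A by first forgetting the size witnesses, F (Diamond_i A) -> F A,
   and then applying k.  An algebra map h is sent to the constant family h;
   the square commutes because forgetting sizes is natural in A.  Identities
   and composites are preserved on the nose on the underlying maps, so the
   functor laws reduce to uniqueness of the commutation proofs. *)
From Stdlib Require Import FunctionalExtensionality ProofIrrelevance.

Lemma Fm_compE (F : Functor) (A B C : Type) (f : A -> B) (g : B -> C) (x : Fo F A) :
  Fm F (fun a => g (f a)) x = Fm F g (Fm F f x).
Proof. exact (f_equal (fun h => h x) (Fm_comp F f g)). Qed.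

Lemma Fm_comp_square (F : Functor) (A B C D : Type)
  (f : A -> B) (g : B -> D) (h : A -> C) (k : C -> D) :
  (forall a, g (f a) = k (h a)) ->
  forall x, Fm F g (Fm F f x) = Fm F k (Fm F h x).
Proof.
  intros square x.
  rewrite <- !Fm_compE.
  f_equal.
  apply functional_extensionality; exact square.
Qed.

Section ConstantAlgebra.
Variable F : Functor.
Variable Size : Type.
Variable lt : Size -> Size -> Prop.

Lemma salg_hom_eq (X Y : SAlg F lt) (f g : SAlgHom X Y) :
  shmap f = shmap g -> f = g.
Proof.
  destruct f as [f f_comm], g as [g g_comm]; simpl; intros <-.
  f_equal; apply proof_irrelevance.
Qed.

Definition forget_size {A : Type} (i : Size) (d : Diamond lt (fun _ => A) i) : A :=
  snd (projT2 d).

Lemma forget_size_dmap (A B : Type) (h : A -> B) (i : Size)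
  (d : Diamond lt (fun _ => A) i) :
  forget_size i (dmap (fun _ => B) (fun _ => h) d) = h (forget_size i d).
Proof. destruct d as [j [p a]]; reflexivity. Qed.

Definition const_salg (A : Alg F) : SAlg F lt :=
  MkSAlg F lt (fun _ => car A) (fun i x => str A (Fm F (@forget_size (car A) i) x)).

Lemma const_salg_hom_comm {A B : Alg F} (h : AlgHom A B) :
  (fun i x => hmap h (sstr (const_salg A) i x)) =
  (fun i x => sstr (const_salg B) i
                (Fm F (dmap (fun _ => car B) (fun _ => hmap h) (i := i)) x)).
Proof.
  apply functional_extensionality_dep; intro i.
  apply functional_extensionality; intro x; simpl.
  rewrite (f_equal (fun k => k _) (hcomm h)); simpl.
  f_equal.
  apply Fm_comp_square; intro d.
  symmetry; apply forget_size_dmap.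
Qed.

Definition const_salg_hom {A B : Alg F} (h : AlgHom A B) :
  SAlgHom (const_salg A) (const_salg B) :=
  MkSAlgHom (const_salg A) (const_salg B) (fun _ => hmap h) (const_salg_hom_comm h).

Lemma const_salg_hom_id (A : Alg F) :
  const_salg_hom (alg_id A) = salg_id (const_salg A).
Proof. apply salg_hom_eq; reflexivity. Qed.

Lemma const_salg_hom_comp (A B C : Alg F) (g : AlgHom B C) (f : AlgHom A B) :
  const_salg_hom (alg_comp g f) = salg_comp (const_salg_hom g) (const_salg_hom f).
Proof. apply salg_hom_eq; reflexivity. Qed.

End ConstantAlgebra.

Theorem lemma3p4
  (Size : Type) (lt : Size -> Size -> Prop)
  (lt_prop : forall (j i : Size) (p q : lt j i), p = q)
  (lt_irrefl : forall i : Size, ~ lt i i)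
  (lt_trans : forall i j k : Size, lt i j -> lt j k -> lt i k)
  (F : Functor) :
  exists (T : Alg F -> SAlg F lt)
         (Tm : forall A B : Alg F, AlgHom A B -> SAlgHom (T A) (T B)),
    (forall A : Alg F, scar (T A) = (fun _ : Size => car A)) /\
    (forall A : Alg F, Tm A A (alg_id A) = salg_id (T A)) /\
    (forall (A B C : Alg F) (g : AlgHom B C) (f : AlgHom A B),
        Tm A C (alg_comp g f) = salg_comp (Tm B C g) (Tm A B f)).
Proof.
  exists (@const_salg F Size lt), (@const_salg_hom F Size lt).
  split; [reflexivity | split].
  - apply const_salg_hom_id.
  - apply const_salg_hom_comp.
Qed.
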